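(* Let $A\in\mathbb{R}^{m\times n}$, $b\in\mathbb{R}^m$ with $Ax=b$ consistent, and let $\{x^k\}_{k\ge0}$ be generated by the RIM-AS algorithm described in the context with $\ell=\infty$ and $\Omega=\{I_m\}$ (i.e. $S_k=I_m$ for all $k$). Let $r^k=Ax^k-b$. Then for each $k\ge0$, $$\operatorname{span}\{A^\top r^0,\ldots,A^\top r^k\}=\mathcal{K}_{k+1}(A^\top A,A^\top r^0).$$
   Context: RIM-AS algorithm with $\ell=\infty$ and $S_k=I_m$: start from $x^0\in\operatorname{Range}(A^\top)$; for $k=0,1,\dots$ (as long as $Ax^k\neq b$): set $M_k=(x^0-x^k,\dots,x^{k-1}-x^k,-A^\top(Ax^k-b))\in\mathbb{R}^{n\times(k+1)}$, $\gamma_k=\|Ax^k-b\|_2^2$, let $s_k$ solve $M_k^\top M_ks_k=\gamma_ke$ with $e$ the last standard unit vector of $\mathbb{R}^{k+1}$, and set $x^{k+1}=x^k+M_ks_k$. For $B\in\mathbb{R}^{n\times n}$, $r\in\mathbb{R}^n$, the Krylov subspace is $\mathcal{K}_p(B,r)=\operatorname{span}\{r,Br,\dots,B^{p-1}r\}$. *)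

From mathcomp Require Import all_boot all_order all_algebra.
Set Implicit Arguments. Unset Strict Implicit. Unset Printing Implicit Defensive.
Import Order.TTheory GRing.Theory Num.Theory.
Local Open Scope ring_scope.

Section RIMAS.
Variables (R : realFieldType) (m n : nat).
Implicit Types (A : 'M[R]_(m, n)) (b : 'cV[R]_m) (x : nat -> 'cV[R]_n).

Definition resid A b x k : 'cV[R]_m := A *m x k - b.

Definition Mk A b x k : 'M[R]_(n, k.+1) :=
  \matrix_(i < n, j < k.+1)
    (if (j < k)%N then (x j - x k) i 0 else (- (A^T *m resid A b x k)) i 0).

Definition gammak A b x k : R := ((resid A b x k)^T *m resid A b x k) 0 0.

Definition elast k : 'cV[R]_(k.+1) := delta_mx ord_max 0.

Definition rimas_step A b x k : Prop :=
  exists s : 'cV[R]_(k.+1),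
    (Mk A b x k)^T *m Mk A b x k *m s = gammak A b x k *: elast k /\
    x k.+1 = x k + Mk A b x k *m s.

(* Matrix whose rows are the (transposed) vectors A^T r^0, ..., A^T r^{p-1};
   its row space is span{A^T r^0, ..., A^T r^{p-1}}. *)
Definition grad_span A b x p : 'M[R]_(p, n) :=
  \matrix_(j < p) (A^T *m resid A b x j)^T.

(* Matrix whose rows are r, B r, ..., B^{p-1} r (transposed);
   its row space is the Krylov subspace K_p(B, r). *)
Definition krylov (B : 'M[R]_n) (r : 'cV[R]_n) p : 'M[R]_(p, n) :=
  \matrix_(j < p) (B ^+ j *m r)^T.

End RIMAS.

From mathcomp Require Import all_boot all_order all_algebra.
Import GRing.Theory Num.Theory.
Local Open Scope ring_scope.
Set Implicit Arguments. Unset Strict Implicit.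

(* Fix a solution z of A z = b.  The normal equations of step j say that
   x^{j+1} - z is orthogonal to every column of M_j; inductively, each error
   x^j - z is orthogonal to all the differences x^c - x^j with c <= j.
   Since A^T r^j = A^T r^0 + A^T A (x^j - x^0) and x^{j+1} - x^j lies in the
   column span of M_j, the gradients A^T r^j lie in the Krylov space.
   Conversely, the steps x^{i+1} - x^i (i < k), together with A^T r^k when
   r^k <> 0, have a triangular Gram matrix with nonzero diagonal against the
   errors x^j - z, so they are linearly independent and the gradient span is
   at least as large as the Krylov space; when r^k = 0 the Krylov space
   itself has dimension at most k. *)

Section RowsMx.
Variables (F : fieldType) (n : nat).

Definition rows_mx p (f : nat -> 'rV[F]_n) : 'M[F]_(p, n) := \matrix_(i < p) f i.

Lemma row_sub_rows_mx p f i : (i < p)%N -> (f i <= rows_mx p f)%MS.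
Proof. by move=> ip; have := row_sub (Ordinal ip) (rows_mx p f); rewrite rowK. Qed.

Lemma rows_mx_sub p q f (S : 'M[F]_(q, n)) :
  (forall i, (i < p)%N -> (f i <= S)%MS) -> (rows_mx p f <= S)%MS.
Proof. by move=> fS; apply/row_subP => i; rewrite rowK fS. Qed.

Lemma rows_mx_mono p q f : (p <= q)%N -> (rows_mx p f <= rows_mx q f)%MS.
Proof.
by move=> pq; apply: rows_mx_sub => i ip; apply: row_sub_rows_mx (leq_trans ip pq).
Qed.

Lemma trmxB_sub p (u v : 'cV[F]_n) (S : 'M[F]_(p, n)) :
  (u^T <= S)%MS -> (v^T <= S)%MS -> ((u - v)^T <= S)%MS.
Proof. by move=> uS vS; rewrite linearB /= addmx_sub // eqmx_opp. Qed.

Lemma row_free_trig p (V : 'M[F]_(p, n)) (W : 'M[F]_(n, p)) :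
  is_trig_mx (V *m W) -> (forall i, (V *m W) i i != 0) -> row_free V.
Proof.
move=> trigVW diagVW; rewrite /row_free eqn_leq rank_leq_row /=.
apply: leq_trans (mxrankM_maxl V W); rewrite mxrank_unit //.
by rewrite unitmxE unitfE det_trig //; apply/prodf_neq0.
Qed.

End RowsMx.

Section Dot.
Variable R : realFieldType.

Definition dot n (u v : 'cV[R]_n) : R := (u^T *m v) 0 0.

Lemma dotBl n (u v w : 'cV[R]_n) : dot (u - v) w = dot u w - dot v w.
Proof. by rewrite /dot linearB mulmxBl !mxE. Qed.

Lemma dotBr n (u v w : 'cV[R]_n) : dot u (v - w) = dot u v - dot u w.
Proof. by rewrite /dot mulmxBr !mxE. Qed.

Lemma dotNl n (u w : 'cV[R]_n) : dot (- u) w = - dot u w.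
Proof. by rewrite /dot linearN mulNmx !mxE. Qed.

Lemma dot0l n (w : 'cV[R]_n) : dot 0 w = 0.
Proof. by rewrite /dot linear0 mul0mx mxE. Qed.

Lemma dot_mulmxl m n (M : 'M[R]_(n, m)) u v : dot (M *m u) v = dot u (M^T *m v).
Proof. by rewrite /dot trmx_mul mulmxA. Qed.

Lemma dot_row p n (M : 'M[R]_(p, n)) v c : (M *m v) c 0 = dot (row c M)^T v.
Proof. by rewrite /dot trmxK -row_mul [RHS]mxE. Qed.

Lemma dot_self_eq0 n (v : 'cV[R]_n) : dot v v = 0 -> v = 0.
Proof.
move=> vv0; apply/matrixP => i j; rewrite (ord1 j) mxE.
have sq_ge0 l : true -> 0 <= v^T 0 l * v l 0 by rewrite mxE -expr2 sqr_ge0.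
move: vv0; rewrite /dot mxE => /(psumr_eq0P sq_ge0)/(_ i isT)/eqP.
by rewrite mxE -expr2 sqrf_eq0 => /eqP.
Qed.

Lemma dot_sub_eq0 p n (S : 'M[R]_(p, n)) u w :
  (u^T <= S)%MS -> S *m w = 0 -> dot u w = 0.
Proof. by rewrite /dot; case/submxP => D -> Sw0; rewrite -mulmxA Sw0 mulmx0 mxE. Qed.

Lemma gram_rows_mxE p q n (v w : nat -> 'cV[R]_n) (i : 'I_p) (j : 'I_q) :
  (rows_mx p (fun i => (v i)^T) *m (rows_mx q (fun j => (w j)^T))^T) i j
  = dot (v i) (w j).
Proof. by rewrite /rows_mx /dot !mxE; apply: eq_bigr => l _; rewrite !mxE. Qed.

End Dot.

Section Krylov.
Variable R : realFieldType.

Lemma krylov_mono n (B : 'M[R]_n) r p q :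
  (p <= q)%N -> (krylov B r p <= krylov B r q)%MS.
Proof. exact: (rows_mx_mono (fun j => (B ^+ j *m r)^T)). Qed.

Lemma krylov_base n (B : 'M[R]_n) r p : (r^T <= krylov B r p.+1)%MS.
Proof.
by have := row_sub_rows_mx (fun j => (B ^+ j *m r)^T) (ltn0Sn p); rewrite mul1mx.
Qed.

Lemma krylov_shift n (B : 'M[R]_n) r p :
  (krylov B r p *m B^T <= krylov B r p.+1)%MS.
Proof.
apply/row_subP => i; rewrite row_mul rowK -trmx_mul mulmxA mulmxE -exprS.
exact: (row_sub_rows_mx (fun j => (B ^+ j *m r)^T) (ltn_ord i : i.+1 < p.+1)%N).
Qed.

Lemma krylov_sub_shift n (B : 'M[R]_n) r p :
  (r^T <= krylov B r p *m B^T)%MS -> (krylov B r p.+1 <= krylov B r p *m B^T)%MS.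
Proof.
move=> rK; apply/row_subP => -[[|i] ip]; rewrite rowK /=; first by rewrite mul1mx.
rewrite exprS -mulmxE -mulmxA trmx_mul submxMr //.
exact: (row_sub_rows_mx (fun j => (B ^+ j *m r)^T) (ip : i < p)%N).
Qed.

End Krylov.

Section RIMAS.
Variables (R : realFieldType) (m n : nat) (A : 'M[R]_(m, n)) (b : 'cV[R]_m).
Variables (x : nat -> 'cV[R]_n) (k : nat) (z : 'cV[R]_n).
Hypothesis solz : A *m z = b.
Hypothesis steps : forall j, (j < k)%N -> rimas_step A b x j.

Local Notation grad j := (A^T *m resid A b x j).
Local Notation M j := (Mk A b x j).
Local Notation G p := (rows_mx p (fun i => (grad i)^T)).
Local Notation K p := (krylov (A^T *m A) (grad 0) p).

Lemma Mk_tr_row j (c : 'I_j.+1) :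
  row c (M j)^T = (if (c < j)%N then x c - x j else - grad j)^T.
Proof. by apply/rowP => l; rewrite !mxE; case: ifP => _; rewrite !mxE. Qed.

Lemma grad_error_dot j : dot (grad j) (x j - z) = gammak A b x j.
Proof. by rewrite dot_mulmxl trmxK mulmxBr solz. Qed.

Lemma gammak_eq0 j : gammak A b x j = 0 -> A *m x j = b.
Proof. by move=> g0; apply/eqP; rewrite -subr_eq0; apply/eqP/dot_self_eq0. Qed.

Lemma grad_shift j : grad j = grad 0 + A^T *m A *m (x j - x 0).
Proof. by rewrite /resid !mulmxBr !mulmxA [RHS]addrC addrA subrK. Qed.

Lemma step_normal j : rimas_step A b x j ->
  (M j)^T *m (x j.+1 - x j) = gammak A b x j *: elast R j.
Proof. by case=> s [normal ->]; rewrite addrC addKr mulmxA. Qed.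

Lemma step_sub j : rimas_step A b x j -> ((x j.+1 - x j)^T <= (M j)^T)%MS.
Proof. by case=> s [_ ->]; rewrite addrC addKr trmx_mul submxMl. Qed.

Lemma step_neq0 j : rimas_step A b x j -> A *m x j != b -> x j.+1 - x j != 0.
Proof.
move=> /step_normal normal; apply: contraNneq => d0; apply/eqP/gammak_eq0.
have := congr1 (fun v : 'cV[R]_j.+1 => v ord_max 0) normal.
by rewrite d0 mulmx0 !mxE !eqxx mulr1.
Qed.

Lemma Mk_tr_diff j c : (c <= j)%N -> ((x c - x j)^T <= (M j)^T)%MS.
Proof.
rewrite leq_eqVlt => /predU1P [-> | cj]; first by rewrite subrr linear0 sub0mx.
by have := row_sub (Ordinal (ltnW cj : c < j.+1)%N) (M j)^T; rewrite Mk_tr_row /= cj.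
Qed.

Lemma Mk_tr_error j :
  (forall c, (c < j)%N -> dot (x c - x j) (x j - z) = 0) ->
  (M j)^T *m (x j - z) = - gammak A b x j *: elast R j.
Proof.
move=> orth; apply/matrixP => c i; rewrite (ord1 i) dot_row Mk_tr_row trmxK !mxE.
have [-> | neq_c] := eqVneq c ord_max.
  by rewrite /= ltnn dotNl grad_error_dot mulr1.
have cj : (c < j)%N by rewrite ltn_neqAle -ltnS ltn_ord andbT -val_eqE in neq_c *.
by rewrite cj orth // mulr0.
Qed.

Lemma error_orth j : (j <= k)%N ->
  forall c, (c <= j)%N -> dot (x c - x j) (x j - z) = 0.
Proof.
elim: j => [_ c | j IH jk c]; first by rewrite leqn0 => /eqP ->; rewrite subrr dot0l.
rewrite leq_eqVlt => /predU1P [-> | ]; first by rewrite subrr dot0l.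
rewrite ltnS => cj; apply: (@dot_sub_eq0 _ _ _ (M j)^T).
  have -> : x c - x j.+1 = (x c - x j) - (x j.+1 - x j) by rewrite opprB addrA subrK.
  by apply: trmxB_sub; [exact: Mk_tr_diff | exact: step_sub (steps jk)].
have -> : x j.+1 - z = (x j.+1 - x j) + (x j - z) by rewrite addrA subrK.
rewrite mulmxDr step_normal; last exact: steps.
rewrite (Mk_tr_error (j:=j)) ?scaleNr ?addrN // => c' /ltnW.
exact: IH (ltnW jk) c'.
Qed.

Lemma Mk_tr_sub j p (S : 'M[R]_(p, n)) :
  (forall c, (c <= j)%N -> ((x c - x 0)^T <= S)%MS) -> ((grad j)^T <= S)%MS ->
  ((M j)^T <= S)%MS.
Proof.
move=> xS gS; apply/row_subP => c; rewrite Mk_tr_row; case: ifP => cj.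
  have -> : x c - x j = (x c - x 0) - (x j - x 0) by rewrite opprB addrA subrK.
  by apply: trmxB_sub; apply: xS; rewrite // ltnW.
by rewrite linearN /= eqmx_opp.
Qed.

Lemma iter_sub_grad_span j : (j <= k)%N -> ((x j - x 0)^T <= G j)%MS.
Proof.
elim/ltn_ind: j => -[_ _ | j IH jk]; first by rewrite subrr linear0 sub0mx.
have xG c : (c <= j)%N -> ((x c - x 0)^T <= G j.+1)%MS.
  move=> cj; apply: submx_trans (IH c cj (leq_trans cj (ltnW jk))) _.
  exact: rows_mx_mono (leqW cj).
have -> : x j.+1 - x 0 = (x j.+1 - x j) + (x j - x 0) by rewrite addrA subrK.
rewrite linearD /= addmx_sub ?xG //.
apply: submx_trans (step_sub (steps jk)) (Mk_tr_sub xG _).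
exact: (row_sub_rows_mx (fun i => (grad i)^T) (ltnSn j)).
Qed.

Lemma grad_span_sub_krylov j : (j <= k.+1)%N -> (G j <= K j)%MS.
Proof.
elim: j => [|j IH] jk; first exact: rows_mx_sub.
apply: rows_mx_sub => i; rewrite ltnS leq_eqVlt => /predU1P [-> | ij].
  rewrite grad_shift linearD /= addmx_sub ?krylov_base // trmx_mul.
  apply: submx_trans (krylov_shift _ _ j); apply: submxMr.
  exact: submx_trans (iter_sub_grad_span jk) (IH (ltnW jk)).
apply: submx_trans (krylov_mono _ _ (leqnSn j)).
exact: submx_trans (row_sub_rows_mx _ ij) (IH (ltnW jk)).
Qed.

Lemma krylov_rank_solved : A *m x k = b -> (\rank (K k.+1) <= k)%N.
Proof.
move=> solk; have shift : (K k.+1 <= K k *m (A^T *m A)^T)%MS.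
  apply: krylov_sub_shift.
  have grad0E : grad 0 = - (A^T *m A *m (x k - x 0)).
    by apply/eqP; rewrite -addr_eq0 -grad_shift /resid solk subrr mulmx0.
  rewrite {1}grad0E linearN /= eqmx_opp trmx_mul submxMr //.
  apply: submx_trans (iter_sub_grad_span (leqnn k)) _.
  exact: grad_span_sub_krylov (leqnSn k).
rewrite (leq_trans (mxrankS shift)) //.
by rewrite (leq_trans (mxrankM_maxl _ _)) // rank_leq_row.
Qed.

Definition dir i := if (i < k)%N then x i.+1 - x i else grad k.

Lemma dir_sub i : (i <= k)%N -> ((dir i)^T <= G k.+1)%MS.
Proof.
rewrite /dir; case: ifP => [ik _ | _ _]; last exact: row_sub_rows_mx (ltnSn k).
have -> : x i.+1 - x i = (x i.+1 - x 0) - (x i - x 0) by rewrite opprB addrA subrK.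
apply: trmxB_sub.
  apply: submx_trans (iter_sub_grad_span ik) _.
  exact: (rows_mx_mono (fun i => (grad i)^T) (leqW ik)).
apply: submx_trans (iter_sub_grad_span (ltnW ik)) _.
exact: (rows_mx_mono (fun i => (grad i)^T) (leqW (ltnW ik))).
Qed.

Lemma dir_row_free p : (p <= k.+1)%N -> (forall i, (i < p)%N -> A *m x i != b) ->
  row_free (rows_mx p (fun i => (dir i)^T)).
Proof.
move=> pk nsol.
apply: (@row_free_trig _ _ _ _ (rows_mx p (fun j => (x j - z)^T))^T).
  apply/is_trig_mxP => i j ij; rewrite gram_rows_mxE /dir.
  have jk : (j <= k)%N by rewrite -ltnS (leq_trans (ltn_ord j) pk).
  have -> : x i.+1 - x i = (x i.+1 - x j) - (x i - x j) by rewrite opprB addrA subrK.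
  by rewrite (leq_trans ij jk) dotBl !error_orth ?subrr // ltnW.
move=> i; rewrite gram_rows_mxE /dir; case: ifP => ik.
  have d_orth : dot (x i.+1 - x i) (x i.+1 - z) = 0.
    by rewrite -[x i.+1 - x i]opprB dotNl error_orth // oppr0.
  have -> : x i - z = (x i.+1 - z) - (x i.+1 - x i).
    by rewrite opprB [RHS]addrC addrA subrK.
  rewrite dotBr d_orth sub0r oppr_eq0.
  have := step_neq0 (steps ik) (nsol i (ltn_ord i)).
  by apply: contraNneq => /dot_self_eq0 ->.
have ei : (i : nat) = k.
  by apply/eqP; rewrite eqn_leq -ltnS (leq_trans (ltn_ord i) pk) leqNgt ik.
have := nsol i (ltn_ord i); rewrite ei grad_error_dot.
by apply: contraNneq => /gammak_eq0 ->.
Qed.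

End RIMAS.

Theorem lemma4p2 (R : realFieldType) (m n : nat)
  (A : 'M[R]_(m, n)) (b : 'cV[R]_m) (x : nat -> 'cV[R]_n) (k : nat) :
  (exists z : 'cV[R]_n, A *m z = b) ->
  (exists y : 'cV[R]_m, x 0%N = A^T *m y) ->
  (forall j, (j < k)%N -> A *m x j != b) ->
  (forall j, (j < k)%N -> rimas_step A b x j) ->
  (grad_span A b x k.+1 == krylov (A^T *m A) (A^T *m resid A b x 0%N) k.+1)%MS.
Proof.
(* The starting point x^0 need not lie in Range(A^T). *)
move=> [z solz] _ nsol steps.
have sGK := grad_span_sub_krylov steps (leqnn k.+1).
rewrite -(mxrank_leqif_eq sGK).2 eqn_leq mxrankS //=.
pose p := if A *m x k == b then k else k.+1.
have pk : (p <= k.+1)%N by rewrite /p; case: ifP.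
have nsolp i : (i < p)%N -> A *m x i != b.
  rewrite /p; case: ifPn => [_ /nsol // | nsolk].
  by rewrite ltnS leq_eqVlt => /predU1P [-> | /nsol].
have rankK : (\rank (krylov (A^T *m A) (A^T *m resid A b x 0) k.+1) <= p)%N.
  rewrite /p; case: ifP => [/eqP/(krylov_rank_solved steps) // | _].
  exact: rank_leq_row.
rewrite (leq_trans rankK) // -{1}(eqP (dir_row_free solz steps pk nsolp)).
by apply/mxrankS/rows_mx_sub => i ip; rewrite dir_sub // -ltnS (leq_trans ip pk).
Qed.
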